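(* For every $p\ge 0$, every permutation in the basis $\mathcal{B}_p$ has length $n$ with $p+2\le n\le 2(p+1)$. In particular $\mathcal{B}_p$ is finite.
   Context: A right-jump transforms $\sigma=\sigma_1\cdots\sigma_n$ into $\sigma_1\cdots\sigma_{i-1}\sigma_{i+1}\cdots\sigma_j\sigma_i\sigma_{j+1}\cdots\sigma_n$ for some $1\le i<j\le n$. A permutation $\pi$ of $[k]$ is a pattern of $\sigma$ (written $\pi\prec\sigma$) if some subsequence of $\sigma$ is order-isomorphic to $\pi$. $\mathcal{C}_p$ is the set of all permutations (of any length $n$) obtainable from the identity $12\cdots n$ by at most $p$ right-jumps. The basis $\mathcal{B}_p$ is the set of permutations $\sigma\notin\mathcal{C}_p$ such that every pattern $\pi\prec\sigma$ with $\pi\ne\sigma$ lies in $\mathcal{C}_p$. *)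

(* Permutations of [n] are represented as sequences of
   naturals that are rearrangements of 1..n. *)
From mathcomp Require Import all_boot.
Set Implicit Arguments. Unset Strict Implicit. Unset Printing Implicit Defensive.

Definition is_perm (s : seq nat) : bool := perm_eq s (iota 1 (size s)).

Definition idperm (n : nat) : seq nat := iota 1 n.

(* Right jump, 0-indexed positions i < j < size s:
   s_0..s_{i-1} s_{i+1}..s_j s_i s_{j+1}..s_{n-1}
   (corresponds to the 1-indexed right jump with positions i+1 < j+1). *)
Definition rjump (i j : nat) (s : seq nat) : seq nat :=
  take i s ++ take (j - i) (drop i.+1 s) ++ [:: nth 0 s i] ++ drop j.+1 s.

Inductive reach : nat -> seq nat -> Prop :=
| reach_id n : reach 0 (idperm n)
| reach_step k s i j : i < j -> j < size s -> reach k s -> reach k.+1 (rjump i j s).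

Definition inC (p : nat) (s : seq nat) : Prop := exists2 k, k <= p & reach k s.

Definition order_iso (x y : seq nat) : Prop :=
  size x = size y /\
  forall a b, a < size x -> b < size x -> (nth 0 x a < nth 0 x b) = (nth 0 y a < nth 0 y b).

Definition pattern (pi sigma : seq nat) : Prop :=
  is_perm pi /\ exists2 m : bitseq, size m = size sigma & order_iso (mask m sigma) pi.

Definition inB (p : nat) (sigma : seq nat) : Prop :=
  is_perm sigma /\ ~ inC p sigma /\
  forall pi, pattern pi sigma -> pi <> sigma -> inC p pi.

From mathcomp Require Import all_boot zify.
Set Implicit Arguments. Unset Strict Implicit.

(* Count the entries of a permutation that are not left-to-right maxima.
   A right jump creates at most one new such entry, and conversely a
   permutation with m of them is reached by m right jumps (repeatedly move the
   last entry, if it is not the maximum, left to just before the first larger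
   entry); so C_p consists of the permutations with at most p non-maxima.
   A basis element therefore has at least p+1 non-maxima, while each proper
   pattern, in particular each one-point deletion, has at most p.  Deleting a
   non-maximum removes exactly one, so there are exactly p+1 of them; deleting
   a left-to-right maximum that is last, or is followed by another maximum,
   removes none.  Hence maxima are isolated and never last, and as the first
   entry is a maximum, p+2 <= n <= 2(p+1). *)

(* [pre] holds the values already read, in any order: an entry is flagged when
   some earlier value exceeds it. *)
Fixpoint nonmax_flags (pre s : seq nat) : seq bool :=
  match s with
  | [::] => [::]
  | x :: t => has (fun w => x < w) pre :: nonmax_flags (x :: pre) t
  end.

Definition nonmax (pre s : seq nat) : nat := count id (nonmax_flags pre s).

Implicit Types (pre s t A B C : seq nat) (x y z : nat).

Lemma nonmax_cons pre x t :
  nonmax pre (x :: t) = has (fun w => x < w) pre + nonmax (x :: pre) t.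
Proof. by []. Qed.

Lemma size_nonmax_flags pre s : size (nonmax_flags pre s) = size s.
Proof. by elim: s pre => //= x t IH pre; rewrite IH. Qed.

Lemma nonmax_cat pre A B : nonmax pre (A ++ B) = nonmax pre A + nonmax (rev A ++ pre) B.
Proof.
elim: A pre => //= x t IH pre; rewrite /nonmax /= -/(nonmax _ _) IH rev_cons cat_rcons.
by rewrite /nonmax addnA.
Qed.

Lemma nonmax_rcons pre A y :
  nonmax pre (rcons A y) = nonmax pre A + has (fun w => y < w) (rev A ++ pre).
Proof. by rewrite -cats1 nonmax_cat nonmax_cons /nonmax /= addn0. Qed.

Lemma eq_nonmax pre pre' s : pre =i pre' -> nonmax pre s = nonmax pre' s.
Proof.
elim: s pre pre' => //= x t IH pre pre' E; rewrite !nonmax_cons (eq_has_r E).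
by rewrite (IH _ (x :: pre')) // => w; rewrite !inE E.
Qed.

Lemma nonmax_subset pre pre' s : {subset pre <= pre'} -> nonmax pre s <= nonmax pre' s.
Proof.
elim: s pre pre' => //= x t IH pre pre' E; rewrite !nonmax_cons.
apply: leq_add; last by apply: IH => w; rewrite !inE => /orP [->|/E ->]; rewrite ?orbT.
by case: hasP => //= -[w /E Hw Hxw]; have -> // : has (fun w => x < w) pre'; apply/hasP; exists w.
Qed.

Lemma nonmax_absorb pre x y s : y \in pre -> x <= y -> nonmax (x :: pre) s = nonmax pre s.
Proof.
elim: s pre => //= z t IH pre Hy Hxy; rewrite !nonmax_cons /=.
have -> : (z < x) || has (fun w => z < w) pre = has (fun w => z < w) pre.
  by case: ltnP => //= Hzx; apply/esym/hasP; exists y => //; lia.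
congr (_ + _); rewrite (@eq_nonmax _ (x :: z :: pre)); last by move=> w; rewrite !inE orbCA.
by apply: IH; rewrite // inE Hy orbT.
Qed.

Lemma nonmax_iota pre a n : (forall y, y \in pre -> y <= a) -> nonmax pre (iota a n) = 0.
Proof.
elim: n a pre => //= n IH a pre H; rewrite nonmax_cons IH.
  by case: hasP => // [[w /H]]; lia.
by move=> y; rewrite inE => /orP [/eqP -> //| /H]; lia.
Qed.

Lemma nonmax_move_right pre A B C x :
  nonmax pre (A ++ B ++ x :: C) <= (nonmax pre (A ++ x :: B ++ C)).+1.
Proof.
rewrite !nonmax_cat !nonmax_cons !nonmax_cat.
have h1 : nonmax (rev A ++ pre) B <= nonmax (x :: rev A ++ pre) B.
  by apply: nonmax_subset => w Hw; rewrite inE Hw orbT.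
have -> : nonmax (x :: rev B ++ rev A ++ pre) C = nonmax (rev B ++ x :: rev A ++ pre) C.
  by apply: eq_nonmax => w; rewrite !(inE, mem_cat) orbCA.
set b1 := has _ (rev B ++ _); set b2 := has _ (rev A ++ _); clearbody b1 b2.
by case: b1; case: b2 => /=; lia.
Qed.

Lemma nonmax_delete_nonmax pre A y B : has (fun w => y < w) (rev A ++ pre) ->
  nonmax pre (A ++ y :: B) = (nonmax pre (A ++ B)).+1.
Proof.
move=> Hy; have [w Hw Hyw] := hasP Hy.
rewrite !nonmax_cat nonmax_cons Hy (@nonmax_absorb _ y w) //; [lia | exact: ltnW].
Qed.

Lemma nonmax_delete_max pre A y z B : ~~ has (fun w => y < w) (rev A ++ pre) -> y <= z ->
  nonmax pre (A ++ y :: z :: B) = nonmax pre (A ++ z :: B).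
Proof.
move=> Hy Hyz; rewrite !nonmax_cat !nonmax_cons (negbTE Hy) /= ltnNge Hyz /=.
rewrite (@eq_nonmax [:: z, y & rev A ++ pre] [:: y, z & rev A ++ pre]);
  last by move=> u; rewrite !inE orbCA.
by rewrite (@nonmax_absorb _ y z) // inE eqxx.
Qed.

Lemma has_take_find (a : pred nat) t : has a (take (find a t) t) = false.
Proof. by elim: t => //= y t IH; case: ifP => //= ->. Qed.

Lemma nonmax_insert t x i : i = find (fun y => x < y) t -> has (fun y => x < y) t ->
  nonmax [::] (take i t ++ x :: drop i t) = nonmax [::] t.
Proof.
move=> Ei Hh; have Hi : i < size t by rewrite Ei -has_find.
rewrite (drop_nth 0 Hi) nonmax_delete_max -?(drop_nth 0 Hi) ?cat_take_drop //.
  by rewrite cats0 has_rev Ei has_take_find.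
by apply: ltnW; rewrite Ei; exact: nth_find.
Qed.

Lemma nonmax_gt0_split pre s : 0 < nonmax pre s ->
  exists A y B, s = A ++ y :: B /\ has (fun w => y < w) (rev A ++ pre).
Proof.
elim: s pre => // x t IH pre; rewrite nonmax_cons; case H: has => /=.
  by move=> _; exists [::], x, t.
move=> /IH [A [y [B [-> Hh]]]]; exists (x :: A), y, B; split => //.
by rewrite rev_cons cat_rcons.
Qed.

Lemma nonmax_map (P : pred nat) (f : nat -> nat) pre s :
    {in P &, forall u v, (u < v) = (f u < f v)} ->
  {subset pre <= P} -> {subset s <= P} -> nonmax (map f pre) (map f s) = nonmax pre s.
Proof.
move=> Hf; elim: s pre => //= x t IH pre Hpre Hs; rewrite !nonmax_cons.
have Hx : x \in P by apply: Hs; rewrite inE eqxx.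
have -> : has (fun w => f x < w) (map f pre) = has (fun w => x < w) pre.
  rewrite has_map; apply: eq_in_has => w /Hpre Hw /=; exact/esym/Hf.
congr (_ + _); apply: (IH (x :: pre)).
  by move=> w; rewrite inE => /orP [/eqP ->|/Hpre].
by move=> w Hw; apply: Hs; rewrite inE Hw orbT.
Qed.

Lemma rjump_split i j s : i < j -> j < size s ->
  s = take i s ++ nth 0 s i :: take (j - i) (drop i.+1 s) ++ drop j.+1 s /\
  rjump i j s = take i s ++ take (j - i) (drop i.+1 s) ++ nth 0 s i :: drop j.+1 s.
Proof.
move=> Hij Hj; split => //.
rewrite -{1}(cat_take_drop i s) (drop_nth 0); last lia.
rewrite -{1}(cat_take_drop (j - i) (drop i.+1 s)) drop_drop.
by have -> : j - i + i.+1 = j.+1 by lia.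
Qed.

Lemma size_rjump i j s : i < j -> j < size s -> size (rjump i j s) = size s.
Proof.
move=> Hij Hj; have [E1 E2] := rjump_split Hij Hj.
by rewrite {2}E1 E2 !size_cat /= size_cat; lia.
Qed.

Lemma nonmax_le_reach k s : reach k s -> nonmax [::] s <= k.
Proof.
elim => [n|k' s' i j Hij Hj _ IH]; first by rewrite /idperm nonmax_iota.
have [E1 E2] := rjump_split Hij Hj.
by rewrite E2; apply: leq_trans (nonmax_move_right _ _ _ _ _) _; rewrite -E1.
Qed.

Lemma rjump_rcons i j s z : i < j -> j < size s ->
  rjump i j (rcons s z) = rcons (rjump i j s) z.
Proof.
move=> Hij Hj; rewrite /rjump -!cats1 -!catA.
rewrite takel_cat; last lia.
rewrite drop_cat; case: ltnP => H1; last lia.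
rewrite takel_cat; last by rewrite size_drop; lia.
rewrite nth_cat; case: ltnP => H2; last lia.
rewrite drop_cat; case: ltnP => H3 //.
have -> : j.+1 - size s = 0 by lia.
by rewrite drop0 (@drop_oversize _ j.+1 s).
Qed.

Lemma reach_rcons k t : reach k t -> reach k (rcons t (size t).+1).
Proof.
elim => [n|k' s' i j Hij Hj _ IH].
  rewrite /idperm size_iota -cats1.
  have -> : iota 1 n ++ [:: n.+1] = iota 1 n.+1 by rewrite -(addn1 n) iotaD add1n addn1.
  exact: (reach_id n.+1).
rewrite size_rjump // -rjump_rcons //; apply: reach_step => //.
by rewrite size_rcons; lia.
Qed.

Lemma rjump_insert t x i : i < size t ->
  rjump i (size t) (take i t ++ x :: drop i t) = rcons t x.
Proof.
move=> Hi; have Ht : size (take i t) = i by rewrite size_take Hi.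
rewrite /rjump (@drop_oversize _ (size t).+1); last by rewrite size_cat /= size_drop Ht; lia.
rewrite takel_cat ?Ht // drop_cat Ht ltnNge leqnSn /= subSnn /= drop0.
rewrite nth_cat Ht ltnn subnn /= (@take_oversize _ i) ?Ht //.
by rewrite (@take_oversize _ (size t - i)) ?size_drop // catA cat_take_drop cats1.
Qed.

Lemma mem_is_perm s x : is_perm s -> (x \in s) = (0 < x <= size s).
Proof. by move=> Hp; rewrite (perm_mem Hp) mem_iota add1n ltnS. Qed.

Lemma is_perm_rcons t : is_perm (rcons t (size t).+1) = is_perm t.
Proof.
by rewrite /is_perm size_rcons -cats1 -addn1 iotaD add1n addn1 perm_cat2r.
Qed.

Lemma is_perm_rcons_has_gt t x : is_perm (rcons t x) -> x != (size t).+1 ->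
  has (fun w => x < w) t.
Proof.
move=> Hp Nx; have := mem_is_perm x Hp; have := mem_is_perm (size t).+1 Hp.
rewrite !mem_rcons !inE eq_sym (negbTE Nx) eqxx size_rcons leqnn /= => Hmax Hx.
by apply/hasP; exists (size t).+1 => //; lia.
Qed.

Lemma perm_eq_insert t x i : perm_eq (take i t ++ x :: drop i t) (rcons t x).
Proof. by rewrite perm_sym perm_rcons perm_sym -cat1s perm_catCA /= cat_take_drop. Qed.

Lemma perm_reach_nonmax s : is_perm s -> reach (nonmax [::] s) s.
Proof.
have [N] := ubnP (size s + nonmax [::] s); elim: N s => // N IH s.
case/lastP: s => [|t x] Hlt Hp; first exact: (reach_id 0).
rewrite size_rcons nonmax_rcons cats0 has_rev in Hlt *.
case: (eqVneq x (size t).+1) => [Ex | Nx].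
  rewrite Ex is_perm_rcons in Hp *.
  have -> : has (fun w => (size t).+1 < w) t = false.
    by apply/hasP => -[w]; rewrite (mem_is_perm _ Hp); lia.
  by rewrite addn0; apply/reach_rcons/IH => //; lia.
have Hh := is_perm_rcons_has_gt Hp Nx.
set i := find (fun w => x < w) t; have Hi : i < size t by rewrite -has_find.
set s' := take i t ++ x :: drop i t.
have Hs' : nonmax [::] s' = nonmax [::] t by exact: nonmax_insert.
have Hsize : size s' = (size t).+1 by rewrite size_cat /= size_take size_drop Hi; lia.
have Hps : is_perm s'.
  by rewrite /is_perm Hsize -(size_rcons t x); exact: perm_trans (perm_eq_insert _ _ _) Hp.
rewrite Hh addn1 -Hs' -(rjump_insert x Hi).
by apply: reach_step; rewrite ?Hsize //; apply: IH; rewrite ?Hsize ?Hs'; lia.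
Qed.

Lemma order_iso_nonmax (x y : seq nat) : order_iso x y -> nonmax [::] y = nonmax [::] x.
Proof.
move=> [Hsz Ho].
pose f v := nth 0 y (index v x).
have Hf : {in x &, forall u v, (u < v) = (f u < f v)}.
  move=> u v Hu Hv; rewrite /f -Ho ?index_mem //.
  by rewrite !nth_index.
have -> : y = map f x.
  apply: (@eq_from_nth _ 0); first by rewrite size_map.
  move=> i Hi; rewrite -Hsz in Hi; rewrite (nth_map 0) // /f.
  have Hm : nth 0 x i \in x by exact: mem_nth.
  have Ha : index (nth 0 x i) x < size x by rewrite index_mem.
  have h1 := Ho _ _ Ha Hi; have h2 := Ho _ _ Hi Ha.
  rewrite (nth_index 0 Hm) ltnn in h1 h2.
  by move: h1 h2 => /esym/negbT h1 /esym/negbT h2; lia.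
by rewrite -[[::]]/(map f [::]); apply: (@nonmax_map (mem x)).
Qed.

Definition rank (s : seq nat) (v : nat) : nat := count (fun w => w <= v) s.
Definition std (s : seq nat) : seq nat := map (rank s) s.

Lemma rank_le s u v : u <= v -> rank s u <= rank s v.
Proof. by move=> H; apply: sub_count => w /= Hw; exact: leq_trans Hw H. Qed.

Lemma rank_lt s u v : v \in s -> u < v -> rank s u < rank s v.
Proof.
elim: s => //= w s IH; rewrite inE => /orP [/eqP <-|Hv] Huv.
  rewrite leqnn (leqNgt v u) Huv /= add0n add1n ltnS; exact: rank_le (ltnW Huv).
have := IH Hv Huv; case: (leqP w u) => H1 /=.
  by rewrite (leq_trans H1 (ltnW Huv)).
by case: (w <= v); rewrite /= ?add0n ?add1n //; lia.
Qed.

Lemma order_iso_std s : order_iso s (std s).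
Proof.
split; first by rewrite size_map.
move=> a b Ha Hb; rewrite !(nth_map 0) //.
case: (ltnP (nth 0 s a) (nth 0 s b)) => H.
  by rewrite rank_lt // mem_nth.
by apply/esym/negbTE; rewrite -leqNgt rank_le.
Qed.

Lemma is_perm_std s : uniq s -> is_perm (std s).
Proof.
move=> Hu.
have Hinj : {in s &, injective (rank s)}.
  move=> u v Hu' Hv' E; case: (ltngtP u v) => // H.
    by have := rank_lt Hv' H; rewrite E ltnn.
  by have := rank_lt Hu' H; rewrite E ltnn.
have Hus : uniq (std s) by rewrite map_inj_in_uniq.
rewrite /is_perm; apply: uniq_perm => //; first exact: iota_uniq.
have Hsub : {subset std s <= iota 1 (size (std s))}.
  move=> r /mapP [v Hv ->]; rewrite mem_iota size_map add1n ltnS.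
  apply/andP; split; last exact: count_size.
  by rewrite /rank -has_count; apply/hasP; exists v => /=.
by have [_] := uniq_min_size Hus Hsub ltac:(by rewrite size_iota).
Qed.

Lemma pattern_delete s A y B : is_perm s -> s = A ++ y :: B ->
  pattern (std (A ++ B)) s /\ std (A ++ B) <> s.
Proof.
move=> Hp Es; have Hu : uniq s by rewrite (perm_uniq Hp) iota_uniq.
split; last by move/(congr1 size); rewrite size_map Es !size_cat /=; lia.
split.
  apply: is_perm_std; apply: subseq_uniq Hu.
  by rewrite Es; apply: cat_subseq => //; exact: subseq_cons.
exists (nseq (size A) true ++ false :: nseq (size B) true).
  by rewrite Es !size_cat /= !size_nseq.
by rewrite Es mask_cat ?size_nseq // /= !mask_true //; exact: order_iso_std.
Qed.

Fixpoint false_isolated (l : seq bool) : bool :=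
  match l with
  | [::] => true
  | [:: b] => b
  | b :: ((c :: _) as t) => (b || c) && false_isolated t
  end.

(* The [head] term strengthens the statement enough to go through by induction. *)
Lemma false_isolated_count l : false_isolated l -> count negb l + head false l <= count id l.
Proof.
elim: l => //= b t IH; case: t IH => [|c t] IH /=; first by case: b.
by move=> /andP [Hbc /IH /= Hc]; case: b c Hbc Hc {IH} => [] [] //= _; lia.
Qed.

Lemma false_isolated_nonmax_flags pre s :
  (forall A y z B, s = A ++ y :: z :: B ->
    has (fun w => y < w) (rev A ++ pre) || has (fun w => z < w) (y :: rev A ++ pre)) ->
  (forall A y, s = rcons A y -> has (fun w => y < w) (rev A ++ pre)) ->
  false_isolated (nonmax_flags pre s).
Proof.
elim: s pre => // x [|z t] IH pre Hpair Hlast; first exact: (Hlast [::]).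
apply/andP; split; first exact: (Hpair [::]).
apply: IH => [A y z' B E | A y E].
  by have := Hpair (x :: A) y z' B; rewrite E rev_cons cat_rcons; apply.
by have := Hlast (x :: A) y; rewrite E rev_cons cat_rcons; apply.
Qed.

Lemma inC_nonmax_le p s : inC p s -> nonmax [::] s <= p.
Proof. by case=> k Hk /nonmax_le_reach /leq_trans; apply. Qed.

Lemma perm_nonmax_inC p s : is_perm s -> nonmax [::] s <= p -> inC p s.
Proof. by move=> Hp Hs; exists (nonmax [::] s) => //; exact: perm_reach_nonmax. Qed.

Section Basis.

Variables (p : nat) (s : seq nat).
Hypothesis sB : inB p s.

Lemma inB_nonmax_delete A y B : s = A ++ y :: B -> nonmax [::] (A ++ B) <= p.
Proof.
case: sB => [Hp [_ Hpat]] Es; have [Hpat' Hne] := pattern_delete Hp Es.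
rewrite -(order_iso_nonmax (order_iso_std _)); exact: inC_nonmax_le (Hpat _ Hpat' Hne).
Qed.

Lemma inB_nonmax : nonmax [::] s = p.+1.
Proof.
case: sB => [Hp [HnC _]].
have Hgt : p < nonmax [::] s by rewrite ltnNge; apply: contra_notN HnC; exact: perm_nonmax_inC.
have [A [y [B [Es Hy]]]] := nonmax_gt0_split (leq_ltn_trans (leq0n p) Hgt).
have := inB_nonmax_delete Es; have := nonmax_delete_nonmax B Hy; rewrite -Es; lia.
Qed.

Lemma inB_false_isolated : false_isolated (nonmax_flags [::] s).
Proof.
apply: false_isolated_nonmax_flags => [A y z B Es | A y Es]; apply/negPn/negP.
  rewrite !negb_or -leqNgt => /and3P [Hy Hyz _].
  have := inB_nonmax_delete Es; rewrite -(nonmax_delete_max B Hy Hyz) -Es inB_nonmax; lia.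
move=> Hy; have := inB_nonmax_delete (etrans Es (esym (cats1 A y))).
have := nonmax_rcons [::] A y; rewrite (negbTE Hy) -Es inB_nonmax cats0; lia.
Qed.

Lemma inB_size : p + 2 <= size s <= 2 * (p + 1).
Proof.
have Hc := false_isolated_count inB_false_isolated.
have Hn := inB_nonmax; rewrite /nonmax in Hn.
have -> : size s = count id (nonmax_flags [::] s) + count negb (nonmax_flags [::] s).
  by rewrite -(size_nonmax_flags [::] s) -(count_predC id).
by move: Hc Hn; case: (s) => [|x t] //=; lia.
Qed.

End Basis.

Theorem mainTheorem5 :
  forall p : nat,
    (forall sigma : seq nat, inB p sigma ->
       p + 2 <= size sigma <= 2 * (p + 1)) /\
    (exists L : seq (seq nat), forall sigma, inB p sigma -> sigma \in L).
Proof.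
move=> p; split=> [sigma|]; first exact: inB_size.
exists (flatten [seq permutations (iota 1 k) | k <- iota 0 (2 * (p + 1)).+1]).
move=> sigma sB; have /andP [_ Hsize] := inB_size sB.
apply/flatten_mapP; exists (size sigma); first by rewrite mem_iota; lia.
by rewrite mem_permutations; case: sB.
Qed.
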